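(* Let $\Lambda\subseteq\Sigma_A$ and $\Gamma\subseteq\Sigma_B$ be shift spaces with $\mathcal O\in\Lambda$, and let $\Phi:\Lambda\to\Gamma$ be a sliding block code. Then $\Phi(\mathcal O)$ is a constant sequence, that is, either $\Phi(\mathcal O)=\mathcal O$ or $\Phi(\mathcal O)=(ddd\dots)$ for some $d\in L_\Gamma$.
   Context: $A,B$ are countable discrete alphabets; $\varepsilon$ is the empty letter. $\Sigma_A$ consists of $A^{\mathbb N}$ together with (when $A$ is infinite) the finite sequences in $A\cup\{\varepsilon\}$ (some entry $\varepsilon$, and all entries after the first $\varepsilon$ equal $\varepsilon$), including the empty sequence $\mathcal O=(\varepsilon\varepsilon\dots)$; its topology is generated by the generalized cylinders $Z(x,F)=\{y: y_i=x_i\ (i\le l(x)),\ y_{l(x)+1}\notin F\}$ ($x$ finite of length $l(x)$, $F\subset A$ finite). The shift is $\sigma((x_i)_i)=(x_{i+1})_i$, so $\sigma(\mathcal O)=\mathcal O$. $L_\Gamma$ is the set of letters of $B$ occurring in elements of $\Gamma$. A shift space is a closed, $\sigma$-invariant $\Lambda\subseteq\Sigma_A$ with the infinite extension property ($\mathcal O\in\Lambda$ iff infinitely many letters occur in $\Lambda$; a finite $x\neq\mathcal O$ is in $\Lambda$ iff infinitely many letters $b$ are such that $xb$ occurs as a word in some element of $\Lambda$). $B(\Sigma_A)$ denotes the set of finite words occurring in elements of $\Sigma_A$. A set $C\subseteq\Lambda$ is finitely defined in $\Lambda$ if there exist $I,J\subseteq\mathbb N$, integers $\ell_i,n_j\ge0$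 and words $b_i,d_j\in B(\Sigma_A)$ with $C=\{x\in\Lambda: (x_1\dots x_{1+\ell_i})=b_i\text{ for some } i\}$ and $\Lambda\setminus C=\{x\in\Lambda: (x_1\dots x_{1+n_j})=d_j\text{ for some } j\}$. A map $\Phi:\Lambda\to\Gamma$ is a sliding block code if there is a partition $\{C_a\}_{a\in B\cup\{\varepsilon\}}$ of $\Lambda$ into finitely defined sets with $\sigma(C_\varepsilon)\subseteq C_\varepsilon$ such that for all $x\in\Lambda$, $n\in\mathbb N$, $(\Phi(x))_n$ is the unique $a$ with $\sigma^{n-1}(x)\in C_a$. *)

(* Sequences are indexed from 0 (entry i here = entry i+1 in the paper).
   A point of Sigma_A is a map x : nat -> option A, None playing the role of
   the empty letter epsilon. *)
From mathcomp Require Import all_boot.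
Set Implicit Arguments. Unset Strict Implicit. Unset Printing Implicit Defensive.

Definition seqA (A : Type) := nat -> option A.

Definition Oseq (A : Type) : seqA A := fun _ => None.

Definition finite_alph (A : eqType) : Prop := exists s : seq A, forall a : A, a \in s.

Definition infinitely_many (A : eqType) (P : A -> Prop) : Prop :=
  forall s : seq A, exists a, P a /\ a \notin s.

(* membership in Sigma_A: after the first eps everything is eps; finite
   sequences (those containing eps) only allowed when A is infinite *)
Definition inSigma (A : eqType) (x : seqA A) : Prop :=
  (forall i, x i = None -> x i.+1 = None) /\
  (finite_alph A -> forall i, x i <> None).

Definition shift (A : Type) (x : seqA A) : seqA A := fun i => x i.+1.

Definition occurs_at (A : Type) (w : seq (option A)) (x : seqA A) (k : nat) : Prop :=
  forall i, i < size w -> x (k + i) = nth None w i.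

Definition cyl (A : eqType) (w : seq A) (F : seq A) (y : seqA A) : Prop :=
  occurs_at (map Some w) y 0 /\ (forall a, y (size w) = Some a -> a \notin F).

(* Lam is closed in Sigma_A for the topology generated by the generalized
   cylinders (which form a basis): each point of Sigma_A outside Lam has a
   generalized cylinder neighbourhood missing Lam *)
Definition closedInSigma (A : eqType) (Lam : seqA A -> Prop) : Prop :=
  forall y, inSigma y -> ~ Lam y ->
    exists (w F : seq A), cyl w F y /\ forall z, inSigma z -> cyl w F z -> ~ Lam z.

Definition letter_of (A : Type) (Lam : seqA A -> Prop) (a : A) : Prop :=
  exists z i, Lam z /\ z i = Some a.

Definition word_of (A : Type) (Lam : seqA A -> Prop) (w : seq (option A)) : Prop :=
  exists z k, Lam z /\ occurs_at w z k.

Definition pad (A : Type) (w : seq A) : seqA A := fun i => nth None (map Some w) i.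

Definition infinite_extension_property (A : eqType) (Lam : seqA A -> Prop) : Prop :=
  (Lam (@Oseq A) <-> infinitely_many (letter_of Lam)) /\
  (forall w : seq A, w != [::] ->
     Lam (pad w) <-> infinitely_many (fun b => word_of Lam (map Some (rcons w b)))).

Definition shift_space (A : eqType) (Lam : seqA A -> Prop) : Prop :=
  (forall x, Lam x -> inSigma x) /\
  closedInSigma Lam /\
  (forall x, Lam x -> Lam (shift x)) /\
  infinite_extension_property Lam.

Definition inB (A : eqType) (w : seq (option A)) : Prop := word_of (@inSigma A) w.

Definition finitely_defined (A : eqType) (Lam C : seqA A -> Prop) : Prop :=
  (forall x, C x -> Lam x) /\
  exists (I J : nat -> Prop) (b d : nat -> seq (option A)),
    (forall i, I i -> 0 < size (b i) /\ inB (b i)) /\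
    (forall j, J j -> 0 < size (d j) /\ inB (d j)) /\
    (forall x, Lam x -> (C x <-> exists i, I i /\ occurs_at (b i) x 0)) /\
    (forall x, Lam x -> (~ C x <-> exists j, J j /\ occurs_at (d j) x 0)).

Definition sliding_block_code (A B : eqType) (Lam : seqA A -> Prop)
    (Gam : seqA B -> Prop) (Phi : seqA A -> seqA B) : Prop :=
  (forall x, Lam x -> Gam (Phi x)) /\
  exists C : option B -> seqA A -> Prop,
    (forall a, finitely_defined Lam (C a)) /\
    (forall x, Lam x -> exists a, C a x) /\
    (forall a a' x, C a x -> C a' x -> a = a') /\
    (forall x, C None x -> C None (shift x)) /\
    (forall x n, Lam x -> C (Phi x n) (iter n (@shift A) x)).

(* The empty sequence is a fixed point of the shift, so every coordinate of
   its image is read off the same point: the n-th letter of Phi(O) is the unique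
   a with sigma^n(O) = O in C_a. *)
From mathcomp Require Import all_boot.
From Stdlib Require Import FunctionalExtensionality.

Set Implicit Arguments.
Unset Strict Implicit.
Unset Printing Implicit Defensive.

Lemma shift_Oseq (A : Type) : shift (@Oseq A) = @Oseq A.
Proof. by []. Qed.

Lemma iter_shift_fixed (A : Type) (x : seqA A) n :
  shift x = x -> iter n (@shift A) x = x.
Proof. by move=> fx; elim: n => [|n IH] //=; rewrite IH. Qed.

Lemma sliding_block_code_shift_fixed_const (A B : eqType) (Lam : seqA A -> Prop)
    (Gam : seqA B -> Prop) (Phi : seqA A -> seqA B) (x : seqA A) :
  sliding_block_code Lam Gam Phi -> Lam x -> shift x = x ->
  forall n, Phi x n = Phi x 0.
Proof.
move=> [_ [C [_ [_ [C_uniq [_ C_Phi]]]]]] Lx fx n.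
apply: (C_uniq _ _ x); last exact: C_Phi _ 0 Lx.
by rewrite -{2}(iter_shift_fixed n fx); apply: C_Phi.
Qed.

Lemma const_seqA_cases (B : Type) (y : seqA B) :
  (forall n, y n = y 0) -> y = @Oseq B \/ exists d, y 0 = Some d /\ y = fun _ => Some d.
Proof.
move=> yc; case E: (y 0) => [d|]; [right; exists d; split => //|left];
  by apply: functional_extensionality => n; rewrite yc E.
Qed.

Theorem mainTheorem5 (A B : countType) (Lam : seqA A -> Prop) (Gam : seqA B -> Prop)
    (Phi : seqA A -> seqA B) :
  shift_space Lam -> shift_space Gam -> Lam (@Oseq A) ->
  sliding_block_code Lam Gam Phi ->
  Phi (@Oseq A) = @Oseq B \/
  exists d : B, letter_of Gam d /\ Phi (@Oseq A) = (fun _ => Some d).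
Proof.
move=> _ _ LO Phi_sbc.
have Phi_const := sliding_block_code_shift_fixed_const Phi_sbc LO (shift_Oseq A).
case: (const_seqA_cases Phi_const) => [-> | [d [Phi0 ->]]]; [by left | right].
exists d; split => //.
by exists (Phi (@Oseq A)), 0; split => //; case: Phi_sbc => Phi_Gam _; exact: Phi_Gam.
Qed.
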